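(* Let $\varphi\colon M\rightarrow N$ be a homomorphism of monoids such that $N$ is locally finite and the trace $\mathrm{tr}_{\varphi}(n_1,n_2)$ is locally finite for all $n_1,n_2\in N$. Then $M$ is locally finite.
   Context: A monoid is locally finite if all its finitely generated submonoids are finite. For a monoid homomorphism $\varphi\colon M\to N$ and $(n_1,n_2)\in N\times N$, the trace $\mathrm{tr}_{\varphi}(n_1,n_2)$ is the quotient of the submonoid $\{m\in M\mid n_1\varphi(m)=n_1,\ \varphi(m)n_2=n_2\}$ of $M$ by the congruence $\equiv$ defined by $m\equiv m'$ if and only if $m_1mm_2=m_1m'm_2$ for all $m_1\in\varphi^{-1}(n_1)$ and all $m_2\in\varphi^{-1}(n_2)$. *)

From Stdlib Require Import List.
Import ListNotations.
Set Implicit Arguments.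

Record monoid := Monoid {
  carrier :> Type;
  mop : carrier -> carrier -> carrier;
  munit : carrier;
  mopA : forall x y z, mop x (mop y z) = mop (mop x y) z;
  mop1l : forall x, mop munit x = x;
  mop1r : forall x, mop x munit = x
}.
Arguments mop {m}.
Arguments munit {m}.

Definition is_hom {M N : monoid} (f : M -> N) : Prop :=
  f munit = munit /\ forall x y, f (mop x y) = mop (f x) (f y).

Inductive gen {M : monoid} (s : list M) : M -> Prop :=
| gen_unit : gen s (@munit M)
| gen_elt : forall x, In x s -> gen s x
| gen_mul : forall x y, gen s x -> gen s y -> gen s (mop x y).

(* Local finiteness of the quotient monoid  S / eqv,  where S = {m | P m} is a
   submonoid of M and eqv a congruence on S.  Written out: for every finite
   family of elements of S, the submonoid of S/eqv generated by their classes
   is finite, i.e. the submonoid of S they generate meets only finitely many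
   eqv-classes (the list t gives representatives of those classes). *)
Definition locally_finite_quot {M : monoid} (P : M -> Prop)
    (eqv : M -> M -> Prop) : Prop :=
  forall s : list M, (forall x, In x s -> P x) ->
    exists t : list M, forall x, gen s x -> exists y, In y t /\ eqv x y.

Definition locally_finite (M : monoid) : Prop :=
  forall s : list M, exists t : list M, forall x, gen s x -> In x t.

Definition trace_sub {M N : monoid} (phi : M -> N) (n1 n2 : N) (m : M) : Prop :=
  mop n1 (phi m) = n1 /\ mop (phi m) n2 = n2.

Definition trace_equiv {M N : monoid} (phi : M -> N) (n1 n2 : N)
    (m m' : M) : Prop :=
  forall m1 m2 : M, phi m1 = n1 -> phi m2 = n2 ->
    mop (mop m1 m) m2 = mop (mop m1 m') m2.

Definition trace_locally_finite {M N : monoid} (phi : M -> N) (n1 n2 : N) : Prop :=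
  locally_finite_quot (trace_sub phi n1 n2) (trace_equiv phi n1 n2).

(* Write elements of a finitely generated submonoid of M as words over the
   generators.  A cut u = a ++ b of a word standing between contexts n1, n2 in N
   yields the pair (n1 phi(a), phi(b) n2); since N is locally finite, only
   finitely many pairs occur.  By induction on a finite set C of pairs, the words
   all of whose cuts give pairs in C fall into finitely many classes of the
   equivalence "same trace class, same images in the contexts".  To add a pair
   (c1, c2), cut a word at its first and at its last cut giving (c1, c2): the
   outer pieces avoid that pair, and the middle piece is a product of elements
   of the trace tr(c1, c2), which realise finitely many classes because the
   trace is locally finite.  In the context (1, 1) the equivalence is equality. *)

From Stdlib Require Import List Classical Lia Wf_nat.
Import ListNotations.
Set Implicit Arguments.

Lemma ex_argmin_nat {A : Type} (f : A -> nat) (P : A -> Prop) :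
  (exists x, P x) -> exists x, P x /\ forall y, P y -> f x <= f y.
Proof.
  intros [x0 Px0].
  destruct (dec_inh_nat_subset_has_unique_least_element
              (fun n => exists x, P x /\ f x = n))
    as [n [[[x [Px <-]] Hmin] _]].
  - intros n; apply classic.
  - eauto.
  - exists x; split; auto.
    intros y Py; apply Hmin; eauto.
Qed.

Lemma ex_filter {A : Type} (P : A -> Prop) (l : list A) :
  exists l', forall x, In x l' <-> In x l /\ P x.
Proof.
  induction l as [|y l [l' H]]; [exists []; simpl; tauto |].
  destruct (classic (P y)); [exists (y :: l') | exists l'];
    intros x; simpl; rewrite H; intuition congruence.
Qed.

Lemma ex_representatives {A : Type} (R : A -> A -> Prop) (Q : A -> Prop) (t : list A) :
  exists t', (forall g, In g t' -> Q g) /\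
    forall y, In y t -> (exists g, Q g /\ R g y) -> exists g, In g t' /\ R g y.
Proof.
  induction t as [|y t [t' [Ht' Hrep]]]; [exists []; simpl; tauto |].
  destruct (classic (exists g, Q g /\ R g y)) as [[g [Qg Rg]] | Hno].
  - exists (g :: t'); split; [intros g' [<- | Hg']; auto |].
    intros y' [<- | Hy'] Hex; [exists g; simpl; auto |].
    destruct (Hrep y' Hy' Hex) as [g' [Hg' Rg']]; exists g'; simpl; auto.
  - exists t'; split; auto.
    intros y' [<- | Hy'] Hex; [contradiction | auto].
Qed.

Section Splits.
Variable A : Type.

Lemma app_eq_app_le (x r y b : list A) :
  x ++ r = y ++ b -> length x <= length y -> exists m, y = x ++ m /\ r = m ++ b.
Proof.
  intros E Hle; destruct (app_eq_app _ _ _ _ E) as [l [[-> ->] | [-> ->]]].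
  - rewrite length_app in Hle.
    destruct l; [exists []; rewrite !app_nil_r; auto | simpl in Hle; lia].
  - eauto.
Qed.

Lemma first_last_split (P : list A -> list A -> Prop) (u : list A) :
  (exists a b, u = a ++ b /\ a <> [] /\ b <> [] /\ P a b) ->
  exists x m b, u = x ++ m ++ b /\ P x (m ++ b) /\ P (x ++ m) b /\
    (forall a1 a2, x = a1 ++ a2 -> a1 <> [] -> a2 <> [] -> ~ P a1 (a2 ++ m ++ b)) /\
    (forall b1 b2, b = b1 ++ b2 -> b1 <> [] -> b2 <> [] -> ~ P (x ++ m ++ b1) b2).
Proof.
  set (S := fun ab : list A * list A =>
    u = fst ab ++ snd ab /\ fst ab <> [] /\ snd ab <> [] /\ P (fst ab) (snd ab)).
  intros [a [b Hab]].
  destruct (ex_argmin_nat (fun ab => length (fst ab)) S) as [[x r] [Sx Hx]];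
    [exists (a, b); exact Hab |].
  destruct (ex_argmin_nat (fun ab => length (snd ab)) S) as [[y b'] [Sy Hy]];
    [exists (a, b); exact Hab |].
  destruct Sx as [Ex [Hx0 [Hr0 Pxr]]], Sy as [Ey [Hy0 [Hb0 Pyb]]]; simpl in *.
  destruct (app_eq_app_le x r y b') as [m [-> ->]];
    [congruence | apply (Hx (y, b')); repeat split; auto |].
  exists x, m, b'; repeat split; auto.
  - intros a1 a2 -> H1 H2 HP.
    assert (Hlt : length (a1 ++ a2) <= length a1) by (apply (Hx (a1, a2 ++ m ++ b'));
      repeat split; simpl; auto; [rewrite Ex, !app_assoc; reflexivity
                                 | destruct a2; simpl; congruence]).
    destruct a2; [congruence | rewrite length_app in Hlt; simpl in Hlt; lia].
  - intros b1 b2 -> H1 H2 HP.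
    assert (Hlt : length (b1 ++ b2) <= length b2) by (apply (Hy (x ++ m ++ b1, b2));
      repeat split; simpl; auto; [rewrite Ex, !app_assoc; reflexivity
                                 | destruct x; simpl; congruence]).
    destruct b1; [congruence | rewrite length_app in Hlt; simpl in Hlt; lia].
Qed.

End Splits.

Section Words.
Context {M : monoid}.

Definition mprod (u : list M) : M := fold_right mop munit u.

Lemma mprod_app (u w : list M) : mprod (u ++ w) = mop (mprod u) (mprod w).
Proof.
  induction u as [|x u IH]; simpl; [now rewrite mop1l | now rewrite IH, mopA].
Qed.

Lemma gen_mprod (s u : list M) : incl u s -> gen s (mprod u).
Proof.
  induction u as [|x u IH]; intros Hu; simpl; [apply gen_unit |].
  apply incl_cons_inv in Hu as [Hx Hu].
  apply gen_mul; [apply gen_elt |]; auto.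
Qed.

Lemma gen_ex_mprod (s : list M) (x : M) : gen s x -> exists u, incl u s /\ mprod u = x.
Proof.
  induction 1 as [|x Hx|x y _ [u [Hu <-]] _ [w [Hw <-]]].
  - exists []; split; [apply incl_nil_l | reflexivity].
  - exists [x]; split; [intros y [<-|[]]; auto | apply mop1r].
  - exists (u ++ w); split; [apply incl_app | apply mprod_app]; auto.
Qed.

End Words.

Lemma hom_mprod {M N : monoid} (phi : M -> N) (u : list M) :
  is_hom phi -> phi (mprod u) = mprod (map phi u).
Proof.
  intros [Hunit Hmul]; induction u as [|x u IH]; simpl; [exact Hunit |].
  now rewrite Hmul, IH.
Qed.

Section Contexts.
Context {M N : monoid} (phi : M -> N).
Hypothesis phi_hom : is_hom phi.

Lemma phi_mul (x y : M) : phi (mop x y) = mop (phi x) (phi y).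
Proof. apply phi_hom. Qed.

Lemma phi_mprod_app (u w : list M) :
  phi (mprod (u ++ w)) = mop (phi (mprod u)) (phi (mprod w)).
Proof. now rewrite mprod_app, phi_mul. Qed.

Definition split_ctx (n1 n2 : N) (a b : list M) : N * N :=
  (mop n1 (phi (mprod a)), mop (phi (mprod b)) n2).

Definition splits_in (C : list (N * N)) (n1 n2 : N) (u : list M) : Prop :=
  forall a b, u = a ++ b -> a <> [] -> b <> [] -> In (split_ctx n1 n2 a b) C.

Lemma split_ctx_app_l (n1 n2 : N) (l a b : list M) :
  split_ctx n1 n2 (l ++ a) b = split_ctx (mop n1 (phi (mprod l))) n2 a b.
Proof. unfold split_ctx; now rewrite phi_mprod_app, mopA. Qed.

Lemma split_ctx_app_r (n1 n2 : N) (a b r : list M) :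
  split_ctx n1 n2 a (b ++ r) = split_ctx n1 (mop (phi (mprod r)) n2) a b.
Proof. unfold split_ctx; now rewrite phi_mprod_app, mopA. Qed.

Lemma splits_in_app (C : list (N * N)) (n1 n2 c1 c2 : N) (a b : list M) :
  split_ctx n1 n2 a b = (c1, c2) -> splits_in C n1 n2 (a ++ b) ->
  splits_in C n1 c2 a /\ splits_in C c1 n2 b.
Proof.
  intros Hab H; injection Hab as <- <-; split.
  - intros a1 a2 -> H1 H2; rewrite <- split_ctx_app_r.
    apply H; auto; [symmetry; apply app_assoc | destruct a2; simpl; congruence].
  - intros b1 b2 -> H1 H2; rewrite <- split_ctx_app_l.
    apply H; auto; [apply app_assoc | destruct a; simpl; congruence].
Qed.

Lemma splits_in_drop (c : N * N) (C : list (N * N)) (n1 n2 : N) (u : list M) :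
  splits_in (c :: C) n1 n2 u ->
  (forall a b, u = a ++ b -> a <> [] -> b <> [] -> split_ctx n1 n2 a b <> c) ->
  splits_in C n1 n2 u.
Proof.
  intros H Hc a b E Ha Hb; destruct (H a b E Ha Hb) as [e|i]; auto.
  exfalso; apply (Hc a b); auto.
Qed.

(* [trace_equiv] together with agreement of the images in both contexts; unlike
   [trace_equiv] alone, this is a congruence with respect to context splitting. *)
Definition ctx_equiv (n1 n2 : N) (x y : M) : Prop :=
  trace_equiv phi n1 n2 x y /\
  mop n1 (phi x) = mop n1 (phi y) /\ mop (phi x) n2 = mop (phi y) n2.

Lemma trace_equiv_sym (n1 n2 : N) (x y : M) :
  trace_equiv phi n1 n2 x y -> trace_equiv phi n1 n2 y x.
Proof. intros T m1 m2 F1 F2; symmetry; auto. Qed.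

Lemma trace_equiv_trans (n1 n2 : N) (x y z : M) :
  trace_equiv phi n1 n2 x y -> trace_equiv phi n1 n2 y z -> trace_equiv phi n1 n2 x z.
Proof. intros T T' m1 m2 F1 F2; now rewrite T, T'. Qed.

Lemma ctx_equiv_refl (n1 n2 : N) (x : M) : ctx_equiv n1 n2 x x.
Proof. repeat split; intros m1 m2 _ _; reflexivity. Qed.

Lemma ctx_equiv_trans (n1 n2 : N) (x y z : M) :
  ctx_equiv n1 n2 x y -> ctx_equiv n1 n2 y z -> ctx_equiv n1 n2 x z.
Proof.
  intros [T [E1 E2]] [T' [E1' E2']]; repeat split;
    [eapply trace_equiv_trans; eauto | congruence | congruence].
Qed.

Lemma ctx_equiv_mul (n1 n2 : N) (a a' b b' : M) :
  ctx_equiv n1 (mop (phi b) n2) a a' -> ctx_equiv (mop n1 (phi a)) n2 b b' ->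
  ctx_equiv n1 n2 (mop a b) (mop a' b').
Proof.
  intros [Ta [Ea1 Ea2]] [Tb [Eb1 Eb2]]; rewrite Ea1 in Tb, Eb1.
  repeat split; rewrite ?phi_mul.
  - intros m1 m2 F1 F2.
    assert (Sa := Ta m1 (mop b m2) F1 ltac:(now rewrite phi_mul, F2)).
    assert (Sb := Tb (mop m1 a') m2 ltac:(now rewrite phi_mul, F1) F2).
    rewrite !mopA in Sa |- *; now rewrite Sa, Sb.
  - now rewrite !mopA, Ea1, Eb1.
  - now rewrite <- !mopA, Ea2, Eb2.
Qed.

Lemma ctx_equiv_app (n1 n2 c1 c2 : N) (u w : list M) (a b : M) :
  split_ctx n1 n2 u w = (c1, c2) ->
  ctx_equiv n1 c2 (mprod u) a -> ctx_equiv c1 n2 (mprod w) b ->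
  ctx_equiv n1 n2 (mprod (u ++ w)) (mop a b).
Proof.
  intros Huw; injection Huw as <- <-; rewrite mprod_app; apply ctx_equiv_mul.
Qed.

Lemma trace_sub_unit (n1 n2 : N) : trace_sub phi n1 n2 munit.
Proof. unfold trace_sub; now rewrite (proj1 phi_hom), mop1l, mop1r. Qed.

Lemma trace_sub_gen (n1 n2 : N) (L : list M) (x : M) :
  (forall y, In y L -> trace_sub phi n1 n2 y) -> gen L x -> trace_sub phi n1 n2 x.
Proof.
  intros HL; induction 1 as [|x Hx|x y _ [A1 A2] _ [B1 B2]];
    [apply trace_sub_unit | auto |].
  unfold trace_sub; rewrite phi_mul; split.
  - now rewrite mopA, A1.
  - now rewrite <- mopA, B2.
Qed.

Lemma ctx_equiv_trace_sub (n1 n2 : N) (x y : M) :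
  ctx_equiv n1 n2 x y -> trace_sub phi n1 n2 x -> trace_sub phi n1 n2 y.
Proof. intros [_ [E1 E2]] [S1 S2]; split; congruence. Qed.

Lemma trace_equiv_ctx_equiv (n1 n2 : N) (x y : M) :
  trace_sub phi n1 n2 x -> trace_sub phi n1 n2 y -> trace_equiv phi n1 n2 x y ->
  ctx_equiv n1 n2 x y.
Proof. intros [X1 X2] [Y1 Y2] T; repeat split; [exact T | congruence | congruence]. Qed.

End Contexts.

Section Bound.
Context {M N : monoid} (phi : M -> N).
Hypothesis phi_hom : is_hom phi.
Hypothesis trace_lf : forall n1 n2 : N, trace_locally_finite phi n1 n2.
Variable s : list M.

Definition bounded_by (C : list (N * N)) : Prop :=
  forall n1 n2 : N, exists L : list M, forall u, incl u s -> splits_in phi C n1 n2 u ->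
    exists v, In v L /\ ctx_equiv phi n1 n2 (mprod u) v.

Lemma bounded_by_nil : bounded_by [].
Proof.
  intros n1 n2; exists (munit :: s); intros u Hu Hsplit.
  exists (mprod u); split; [| apply ctx_equiv_refl].
  destruct u as [|x [|y u]]; simpl.
  - now left.
  - right; rewrite mop1r; apply Hu; now left.
  - destruct (Hsplit [x] (y :: u)); easy.
Qed.

Lemma bounded_by_trace_words (C : list (N * N)) (c1 c2 : N) :
  bounded_by C -> exists L, (forall x, In x L -> trace_sub phi c1 c2 x) /\
    forall u, incl u s -> splits_in phi C c1 c2 u -> trace_sub phi c1 c2 (mprod u) ->
      exists v, In v L /\ ctx_equiv phi c1 c2 (mprod u) v.
Proof.
  intros HC; destruct (HC c1 c2) as [L HL], (ex_filter (trace_sub phi c1 c2) L) as [L' HL'].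
  exists L'; split; [intros x Hx; apply HL'; exact Hx |].
  intros u Hu Hsplit Htr.
  destruct (HL u Hu Hsplit) as [v [Hv Huv]]; exists v; split; auto.
  apply HL'; split; auto; eapply ctx_equiv_trace_sub; eauto.
Qed.

(* A cut with pair [(c1, c2)] splits a trace word into two trace words. *)
Lemma trace_words_gen (C : list (N * N)) (c1 c2 : N) (L : list M) :
  (forall u, incl u s -> splits_in phi C c1 c2 u -> trace_sub phi c1 c2 (mprod u) ->
     exists v, In v L /\ ctx_equiv phi c1 c2 (mprod u) v) ->
  forall w, incl w s -> splits_in phi ((c1, c2) :: C) c1 c2 w ->
    trace_sub phi c1 c2 (mprod w) -> exists p, gen L p /\ ctx_equiv phi c1 c2 (mprod w) p.
Proof.
  intros HL w; induction w as [w IH] using (well_founded_induction (well_founded_ltof _ (@length M))).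
  intros Hw Hsplit [Tw1 Tw2].
  destruct (classic (exists a b, w = a ++ b /\ a <> [] /\ b <> [] /\
                                 split_ctx phi c1 c2 a b = (c1, c2)))
    as [[a [b [-> [Ha [Hb Hab]]]]] | Hno].
  - destruct (splits_in_app phi_hom Hab Hsplit) as [Sa Sb].
    apply incl_app_inv in Hw as [Hwa Hwb].
    pose proof Hab as Hab'; injection Hab' as Ea Eb.
    rewrite (phi_mprod_app phi_hom) in Tw1, Tw2.
    assert (Ta : trace_sub phi c1 c2 (mprod a)).
    { split; [exact Ea |].
      rewrite <- Eb at 1; now rewrite mopA. }
    assert (Tb : trace_sub phi c1 c2 (mprod b)).
    { split; [| exact Eb].
      rewrite <- Ea at 1; now rewrite <- mopA. }
    assert (La : ltof _ (@length M) a (a ++ b))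
      by (unfold ltof; rewrite length_app; destruct b; [congruence | simpl; lia]).
    assert (Lb : ltof _ (@length M) b (a ++ b))
      by (unfold ltof; rewrite length_app; destruct a; [congruence | simpl; lia]).
    destruct (IH a La Hwa Sa Ta) as [p1 [G1 E1]], (IH b Lb Hwb Sb Tb) as [p2 [G2 E2]].
    exists (mop p1 p2); split; [now apply gen_mul |].
    exact (ctx_equiv_app phi_hom Hab E1 E2).
  - destruct (HL w Hw) as [v [Hv Hwv]]; [| split; auto |].
    + apply splits_in_drop with (c := (c1, c2)); auto.
      intros a b E Ha Hb Hab; apply Hno; eauto 7.
    + exists v; split; [now apply gen_elt | exact Hwv].
Qed.

Lemma trace_words_rep (C : list (N * N)) (c1 c2 : N) :
  bounded_by C -> exists G, forall w, incl w s ->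
    splits_in phi ((c1, c2) :: C) c1 c2 w -> trace_sub phi c1 c2 (mprod w) ->
    exists g, In g G /\ ctx_equiv phi c1 c2 (mprod w) g.
Proof.
  intros HC; destruct (bounded_by_trace_words c1 c2 HC) as [L [HLtr HL]].
  destruct (trace_lf L HLtr) as [t Ht].
  destruct (ex_representatives (trace_equiv phi c1 c2) (gen L) t) as [G [HGgen HGrep]].
  exists G; intros w Hw Hsplit Htr.
  destruct (trace_words_gen L HL Hw Hsplit Htr) as [p [Gp Ewp]].
  destruct (Ht p Gp) as [y [Hy Tpy]].
  destruct (HGrep y Hy) as [g [Hg Tgy]]; [eauto |].
  exists g; split; auto.
  apply (ctx_equiv_trans Ewp), trace_equiv_ctx_equiv;
    [exact (trace_sub_gen phi_hom HLtr Gp) | exact (trace_sub_gen phi_hom HLtr (HGgen g Hg)) |].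
  apply (trace_equiv_trans Tpy), trace_equiv_sym, Tgy.
Qed.

Lemma bounded_by_cons (c : N * N) (C : list (N * N)) : bounded_by C -> bounded_by (c :: C).
Proof.
  destruct c as [c1 c2]; intros HC n1 n2.
  destruct (HC n1 n2) as [L0 H0], (HC n1 c2) as [Lx Hx], (HC c1 n2) as [Lz Hz],
    (trace_words_rep c1 c2 HC) as [G HG].
  exists (L0 ++ map (fun '(x, (g, z)) => mop x (mop g z)) (list_prod Lx (list_prod G Lz))).
  intros u Hu Hsplit.
  destruct (classic (exists a b, u = a ++ b /\ a <> [] /\ b <> [] /\
                                 split_ctx phi n1 n2 a b = (c1, c2))) as [Hcut | Hno].
  2: { destruct (H0 u Hu) as [v [Hv Huv]]; [| exists v; split; [apply in_or_app|]; auto].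
       apply splits_in_drop with (c := (c1, c2)); auto.
       intros a b E Ha Hb Hab; apply Hno; eauto 7. }
  destruct (first_last_split (fun a b => split_ctx phi n1 n2 a b = (c1, c2)) Hcut)
    as [x [m [b [-> [Hxmb [Hxm_b [Hfirst Hlast]]]]]]].
  pose proof Hxmb as Exmb; injection Exmb as Ex Emb.
  pose proof Hxm_b as Exm_b; injection Exm_b as Exm Eb.
  assert (Hmb : split_ctx phi c1 n2 m b = (c1, c2)).
  { rewrite <- Ex at 1; now rewrite <- (split_ctx_app_l phi_hom). }
  destruct (splits_in_app phi_hom Hxmb Hsplit) as [Sx Smb].
  destruct (splits_in_app phi_hom Hmb Smb) as [Sm Sb].
  apply incl_app_inv in Hu as [Hux Hu]; apply incl_app_inv in Hu as [Hum Hub].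
  assert (Tm : trace_sub phi c1 c2 (mprod m)).
  { split.
    - rewrite <- Ex at 1; now rewrite <- mopA, <- (phi_mprod_app phi_hom).
    - rewrite <- Eb at 1; now rewrite mopA, <- (phi_mprod_app phi_hom). }
  destruct (Hx x Hux) as [x' [Hx' Exx']].
  { apply splits_in_drop with (c := (c1, c2)); auto.
    intros a1 a2 -> H1 H2 Hc; apply (Hfirst a1 a2 eq_refl H1 H2).
    now rewrite (split_ctx_app_r phi_hom), Emb. }
  destruct (HG m Hum Sm Tm) as [g [Hg Emg]].
  destruct (Hz b Hub) as [z [Hz' Ebz]].
  { apply splits_in_drop with (c := (c1, c2)); auto.
    intros b1 b2 -> H1 H2 Hc; apply (Hlast b1 b2 eq_refl H1 H2).
    now rewrite app_assoc, (split_ctx_app_l phi_hom), Exm. }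
  exists (mop x' (mop g z)); split.
  - apply in_or_app; right; apply in_map_iff.
    exists (x', (g, z)); split; [reflexivity | now apply in_prod; [| apply in_prod]].
  - exact (ctx_equiv_app phi_hom Hxmb Exx' (ctx_equiv_app phi_hom Hmb Emg Ebz)).
Qed.

Lemma bounded_by_all (C : list (N * N)) : bounded_by C.
Proof.
  induction C as [|c C IH]; [exact bounded_by_nil | exact (bounded_by_cons c IH)].
Qed.

End Bound.

Theorem theorem2p1 (M N : monoid) (phi : M -> N) :
  is_hom phi ->
  locally_finite N ->
  (forall n1 n2 : N, trace_locally_finite phi n1 n2) ->
  locally_finite M.
Proof.
  intros phi_hom HN Htr s.
  destruct (HN (map phi s)) as [T HT].
  destruct (bounded_by_all phi_hom Htr s (list_prod T T) munit munit) as [L HL].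
  exists L; intros x Hx.
  destruct (gen_ex_mprod Hx) as [u [Hu <-]].
  destruct (HL u Hu) as [v [Hv [Tuv _]]].
  - intros a b -> _ _; apply incl_app_inv in Hu as [Ha Hb].
    unfold split_ctx; rewrite mop1l, mop1r.
    apply in_prod; apply HT; rewrite hom_mprod by exact phi_hom;
      apply gen_mprod, incl_map; assumption.
  - specialize (Tuv munit munit (proj1 phi_hom) (proj1 phi_hom)).
    rewrite !mop1l, !mop1r in Tuv; now rewrite Tuv.
Qed.
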